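(* Let $A\in\mathbb{R}^{m\times n}$ with $\operatorname{rk}(A)=m$ and $b\in\mathbb{R}^m$, and let $x$ be a basic (not necessarily nonnegative) solution of $Ax=b$, i.e. $Ax=b$ and $x_{[n]\setminus B}=\mathbb{0}$ for some $B\subseteq[n]$ such that the columns of $A_B$ form a basis. Then for every $z\in\mathbb{R}^n$ with $Az=b$, $\|x\|_\infty\le\kappa_A\|z\|_1$.
   Context: An elementary vector of $\ker(A)$ is a nonzero $g\in\ker(A)$ with inclusion-minimal support among nonzero vectors of $\ker(A)$. The circuit imbalance is $\kappa_A=\max\{|g_i|/|g_j|: g \text{ elementary},\ i,j\in\mathrm{supp}(g)\}$. *)

From HB Require Import structures.
From mathcomp Require Import all_boot all_order all_algebra.
From mathcomp Require Import boolp classical_sets reals.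
Set Implicit Arguments. Unset Strict Implicit. Unset Printing Implicit Defensive.
Import Order.TTheory GRing.Theory Num.Theory.
Local Open Scope ring_scope.
Local Open Scope classical_set_scope.

Section Defs.
Variable R : realType.

Definition supp n (g : 'cV[R]_n) : {set 'I_n} := [set i | g i 0 != 0].

Definition elementary m n (A : 'M[R]_(m, n)) (g : 'cV[R]_n) : Prop :=
  [/\ g != 0, A *m g = 0 &
      forall h : 'cV[R]_n, h != 0 -> A *m h = 0 -> ~ (supp h \proper supp g)].

(* Convention: if ker(A) = {0} (no elementary vectors) we take kappa_A = 1;
   otherwise the max is always >= 1, so Num.max 1 _ does not change it. *)
Definition kappa m n (A : 'M[R]_(m, n)) : R :=
  Num.max 1 (sup [set r : R | exists g i j, [/\ elementary A g,
      i \in supp g, j \in supp g & r = `|g i 0| / `|g j 0|]]).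

Definition colsB m n (A : 'M[R]_(m, n)) (B : {set 'I_n}) : 'M[R]_(m, #|B|) :=
  \matrix_(i < m, j < #|B|) A i (enum_val j).

Definition cols_basis m n (A : 'M[R]_(m, n)) (B : {set 'I_n}) : bool :=
  row_free (colsB A B)^T && row_full (colsB A B)^T.

Definition norm_inf n (x : 'cV[R]_n) : R := \big[Num.max/0]_(i < n) `|x i 0|.
Definition norm_one n (x : 'cV[R]_n) : R := \sum_(i < n) `|x i 0|.

End Defs.

(* Let B index a column basis of A.  Solving A_B y = A for y and padding with
   zero rows outside B gives a matrix G with A G = A; since x and G z are both
   supported on B and A x = A z = A (G z), independence of the columns of A_B
   forces x = G z.  For j outside B, the column G e_j - e_j lies in ker(A) and
   is supported on B + {j}; every kernel vector with smaller support would be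
   supported on B, so it is elementary, and its entry -1 at j bounds every
   other entry |G_ij| by kappa_A.  For j in B, G e_j = e_j.  Hence
   |x_i| <= sum_j |G_ij| |z_j| <= kappa_A |z|_1. *)
From HB Require Import structures.
From mathcomp Require Import all_boot all_order all_algebra.
From mathcomp Require Import boolp classical_sets reals.
Import Order.TTheory GRing.Theory Num.Theory.
Local Open Scope ring_scope.

Lemma norm_inf_mulmx_le (R : realType) p q (M : 'M[R]_(p, q)) (z : 'cV[R]_q) k :
  0 <= k -> (forall i j, `|M i j| <= k) -> norm_inf (M *m z) <= k * norm_one z.
Proof.
move=> k0 Mk; apply: bigmax_le => [|i _]; first by rewrite mulr_ge0 ?sumr_ge0.
rewrite mxE mulr_sumr; apply: le_trans (ler_norm_sum _ _ _) _.
by apply: ler_sum => j _; rewrite normrM ler_wpM2r.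
Qed.

Section CircuitImbalance.
Set Implicit Arguments.
Unset Strict Implicit.
Variables (R : realType) (m n : nat) (A : 'M[R]_(m, n)).

Lemma kappa_ge1 : 1 <= kappa A.
Proof. by rewrite /kappa le_max lexx. Qed.

Lemma elementary_supp_eq_scale (g g' : 'cV[R]_n) :
  elementary A g -> elementary A g' -> supp g = supp g' -> exists c, g' = c *: g.
Proof.
move=> [g0 Ag _] [_ Ag' minimal'] sgg'.
have [j gj] : exists j, g j 0 != 0.
  apply/existsP; apply: contraR g0; rewrite negb_exists => /forallP g0.
  by apply/eqP/matrixP => k l; rewrite (ord1 l) mxE; apply/eqP/negPn.
exists (g' j 0 / g j 0); apply/subr0_eq/eqP; apply: contraT => h0.
have Ah : A *m (g' - g' j 0 / g j 0 *: g) = 0.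
  by rewrite mulmxBr -scalemxAr Ag Ag' scaler0 subr0.
case: (minimal' _ h0 Ah); apply/properP; split.
  apply/fintype.subsetP => k; rewrite !inE !mxE; apply: contraR; rewrite negbK => /eqP g'k.
  have : k \notin supp g by rewrite sgg' inE g'k eqxx.
  by rewrite inE negbK g'k => /eqP ->; rewrite mulr0 subr0.
by exists j; rewrite -?sgg' !inE // !mxE divfK // subrr eqxx.
Qed.

(* Elementary vectors with a given support are all proportional, so each of
   the finitely many (support, i, j) triples contributes a single ratio. *)
Lemma elementary_ratio_bounded :
  exists M, forall g i j, elementary A g -> `|g i 0| / `|g j 0| <= M.
Proof.
have bound_at (p : {set 'I_n} * 'I_n * 'I_n) : exists M : R,
    forall g, elementary A g -> supp g = p.1.1 -> `|g p.1.2 0| / `|g p.2 0| <= M.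
  case: p => [[T i] j] /=.
  case: (pselect (exists g0, elementary A g0 /\ supp g0 = T)) => [[g0 [e0 s0]]|none].
    exists (`|g0 i 0| / `|g0 j 0|) => g eg sg.
    have [c ->] := elementary_supp_eq_scale e0 eg (etrans s0 (esym sg)).
    rewrite !mxE !normrM; have [->|c0] := eqVneq `|c| 0; first by rewrite !mul0r divr_ge0.
    by rewrite -mulf_div divff // mul1r.
  by exists 0 => g eg sg; case: none; exists g.
have [f fP] := choice bound_at.
exists (\sum_p `|f p|) => g i j eg.
apply: le_trans (fP (supp g, i, j) g eg erefl) _; apply: le_trans (ler_norm _) _.
by rewrite (bigD1 (supp g, i, j)) //= lerDl sumr_ge0.
Qed.

Lemma elementary_ratio_le_kappa (g : 'cV[R]_n) i j :
  elementary A g -> i \in supp g -> j \in supp g -> `|g i 0| / `|g j 0| <= kappa A.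
Proof.
move=> eg ig jg; rewrite /kappa le_max; apply/orP; right.
have [M MP] := elementary_ratio_bounded.
apply: ub_le_sup; last by exists g, i, j.
by exists M => _ [h [a [b [eh _ _ ->]]]]; apply: MP.
Qed.

Variable B : {set 'I_n}.

Lemma colsB_free_ker_eq0 (v : 'cV[R]_n) : row_free (colsB A B)^T ->
  (forall i, i \notin B -> v i 0 = 0) -> A *m v = 0 -> v = 0.
Proof.
move=> freeB vB Av; pose c : 'cV[R]_#|B| := \col_l v (enum_val l) 0.
have Ac : colsB A B *m c = 0.
  apply/matrixP => r k; rewrite (ord1 k); transitivity ((A *m v) r 0); last first.
    by rewrite Av.
  rewrite !mxE [RHS](bigID (mem B)) /= [X in _ = _ + X]big1 ?addr0; last first.
    by move=> i /vB ->; rewrite mulr0.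
  by rewrite [RHS]big_enum_val; apply: eq_bigr => l _; rewrite !mxE.
have c0 : c = 0.
  apply/trmx_inj/(row_free_inj freeB).
  by rewrite trmx0 mul0mx -trmx_mul Ac trmx0.
apply/matrixP => k j; rewrite (ord1 j) mxE.
have [kB|] := boolP (k \in B); last exact: vB.
by have := congr1 (fun M : 'cV_#|B| => M (enum_rank_in kB k) 0) c0; rewrite !mxE enum_rankK_in.
Qed.

Lemma exists_colsB_lift : row_full (colsB A B)^T ->
  exists G : 'M[R]_n, A *m G = A /\ forall k j, k \notin B -> G k j = 0.
Proof.
move=> /row_fullP[D AD1].
pose E : 'M[R]_(n, #|B|) := \matrix_(k, l) (k == enum_val l)%:R.
have AE : colsB A B = A *m E.
  apply/matrixP => r l; rewrite !mxE (bigD1 (enum_val l)) //= mxE eqxx mulr1.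
  by rewrite big1 ?addr0 // => k /negbTE kl; rewrite mxE kl mulr0.
exists (E *m D^T *m A); split.
  by rewrite !mulmxA -AE -[colsB A B]trmxK -trmx_mul AD1 trmx1 mul1mx.
move=> k j kB; rewrite mxE big1 // => l _; rewrite mxE big1 ?mul0r // => l' _.
by rewrite mxE; case: eqP => [kl|]; [move: kB; rewrite kl enum_valP | rewrite mul0r].
Qed.

Lemma fundamental_circuit_elementary (g : 'cV[R]_n) j : row_free (colsB A B)^T ->
  j \notin B -> A *m g = 0 -> g j 0 != 0 ->
  (forall k, k \notin B -> k != j -> g k 0 = 0) -> elementary A g.
Proof.
move=> freeB jB Ag gj gout; split => //.
  by apply: contraNneq gj => ->; rewrite mxE.
move=> h h0 Ah /properP[/fintype.subsetP shg [k kg kh]].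
pose c := h j 0 / g j 0.
have hcg : h - c *: g = 0.
  apply: colsB_free_ker_eq0 freeB _ _; last first.
    by rewrite mulmxBr -scalemxAr Ah Ag scaler0 subr0.
  move=> k' k'B; rewrite !mxE; have [->|k'j] := eqVneq k' j; first by rewrite divfK ?subrr.
  rewrite gout // mulr0 subr0; apply/eqP; apply: contraT => hk'.
  by have := shg k'; rewrite !inE gout // eqxx hk' => /(_ isT).
have c0 : c = 0.
  have := congr1 (fun M : 'cV_n => M k 0) hcg; rewrite !mxE.
  move: kh kg; rewrite !inE negbK => /eqP -> gk /eqP.
  by rewrite sub0r oppr_eq0 mulf_eq0 (negbTE gk) orbF => /eqP.
by move: hcg h0; rewrite c0 scale0r subr0 => ->; rewrite eqxx.
Qed.

Lemma colsB_lift_entry_le_kappa (G : 'M[R]_n) : row_free (colsB A B)^T ->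
  A *m G = A -> (forall k j, k \notin B -> G k j = 0) ->
  forall i j, `|G i j| <= kappa A.
Proof.
move=> freeB AG G0 i j.
pose g : 'cV[R]_n := col j G - delta_mx j 0.
have gE k : g k 0 = G k j - (k == j)%:R by rewrite !mxE andbT.
have Ag : A *m g = 0 by rewrite mulmxBr colE mulmxA AG subrr.
have [jB|jB] := boolP (j \in B).
  have g0 : g = 0.
    apply: colsB_free_ker_eq0 freeB _ Ag => k kB.
    by rewrite gE G0 //; case: eqP kB => [->|_]; rewrite ?jB ?subr0.
  have := gE i; rewrite g0 mxE => /esym/subr0_eq ->.
  by apply: le_trans kappa_ge1; case: (i == j); rewrite ?normr1 ?normr0.
have [->|Gij] := eqVneq (G i j) 0; first by rewrite normr0 (le_trans ler01 kappa_ge1).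
have gj : g j 0 = -1 by rewrite gE G0 // eqxx sub0r.
have gi : g i 0 = G i j.
  have [ij|/negbTE ij] := eqVneq i j; last by rewrite gE ij subr0.
  by move: Gij; rewrite ij G0 ?eqxx.
have eg : elementary A g.
  apply: fundamental_circuit_elementary freeB jB Ag _ _; first by rewrite gj oppr_eq0 oner_eq0.
  by move=> k kB /negbTE kj; rewrite gE G0 // kj subr0.
have := elementary_ratio_le_kappa eg (_ : i \in supp g) (_ : j \in supp g).
rewrite gi gj normrN normr1 divr1; apply; rewrite inE ?gi //.
by rewrite gj oppr_eq0 oner_eq0.
Qed.

End CircuitImbalance.

Theorem corollary2p8 (R : realType) (m n : nat) (A : 'M[R]_(m, n))
    (b : 'cV[R]_m) (x : 'cV[R]_n) :
  \rank A = m ->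
  A *m x = b ->
  (exists B : {set 'I_n},
      cols_basis A B /\ (forall i : 'I_n, i \notin B -> x i 0 = 0)) ->
  forall z : 'cV[R]_n, A *m z = b -> norm_inf x <= kappa A * norm_one z.
Proof.
(* The rank condition is implied by the existence of a column basis. *)
move=> _ Ax [B [/andP[freeB fullB] xB]] z Az.
have [G [AG G0]] := exists_colsB_lift fullB.
have -> : x = G *m z.
  apply/subr0_eq/(colsB_free_ker_eq0 freeB).
    by move=> i iB; rewrite !mxE xB // big1 ?subr0 // => j _; rewrite G0 ?mul0r.
  by rewrite mulmxBr mulmxA AG Ax Az subrr.
apply: norm_inf_mulmx_le (le_trans ler01 (kappa_ge1 A)) _.
exact: colsB_lift_entry_le_kappa freeB AG G0.
Qed.
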